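(* Let $R$ be an abelian $\star$-ring. If $a\in R$ is $\star$-clean, then $ae$ is $\star$-clean for every $e\in P(R)$.
   Context: Rings are associative with identity; $R$ is abelian if all its idempotents are central. A $\star$-ring is a ring with a map $\star$ satisfying $(x+y)^\star=x^\star+y^\star$, $(xy)^\star=y^\star x^\star$, $(x^\star)^\star=x$. A projection is $p$ with $p^2=p=p^\star$; $P(R)$ is the set of projections, $U(R)$ the units. An element $x$ is $\star$-clean if $x=u+p$ with $u\in U(R)$, $p\in P(R)$. *)

From mathcomp Require Import all_boot all_algebra.
Set Implicit Arguments. Unset Strict Implicit. Unset Printing Implicit Defensive.
Import GRing.Theory.
Local Open Scope ring_scope.

Definition is_star_ring (R : ringType) (star : R -> R) : Prop :=
  [/\ forall x y : R, star (x + y) = star x + star y,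
      forall x y : R, star (x * y) = star y * star x
    & forall x : R, star (star x) = x].

Definition abelian_ring (R : ringType) : Prop :=
  forall e : R, e * e = e -> forall x : R, e * x = x * e.

Definition projection (R : ringType) (star : R -> R) (p : R) : Prop :=
  p * p = p /\ star p = p.

Definition star_clean (R : unitRingType) (star : R -> R) (x : R) : Prop :=
  exists u p : R, u \is a GRing.unit /\ projection star p /\ x = u + p.

From mathcomp Require Import all_boot all_algebra.
Local Open Scope ring_scope.
Import GRing.Theory.

(* If [a = u + p] and [e] is a central projection, then
   [a e = (u e - (1 - e)) + (p e + (1 - e))]: the first summand is a unit with
   inverse [u^-1 e - (1 - e)], and the second one is the sum of the orthogonal
   projections [p e] and [1 - e]. *)

Section CentralIdempotent.
Variables (R : pzRingType) (e : R).
Hypotheses (ee : e * e = e) (ce : forall x, e * x = x * e).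

Lemma mul_idem_compl : e * (1 - e) = 0.
Proof. by rewrite mulrBr mulr1 ee subrr. Qed.

Lemma mul_compl_idem : (1 - e) * e = 0.
Proof. by rewrite mulrBl mul1r ee subrr. Qed.

Lemma idem_compl : (1 - e) * (1 - e) = 1 - e.
Proof. by rewrite mulrBr mulr1 mul_compl_idem subr0. Qed.

Lemma mul_corner (x y : R) :
  (x * e - (1 - e)) * (y * e - (1 - e)) = x * y * e + (1 - e).
Proof.
rewrite mulrBr [_ * (y * e)]mulrBl [_ * (1 - e)]mulrBl idem_compl.
have -> : x * e * (y * e) = x * y * e by rewrite mulrA -(mulrA x) ce mulrA -mulrA ee.
have -> : x * e * (1 - e) = 0 by rewrite -mulrA mul_idem_compl mulr0.
have -> : (1 - e) * (y * e) = 0 by rewrite -ce mulrA mul_compl_idem mul0r.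
by rewrite !subr0 sub0r opprK.
Qed.

End CentralIdempotent.

Lemma unit_corner (R : unitRingType) (e u : R) :
  e * e = e -> (forall x, e * x = x * e) -> u \is a GRing.unit ->
  u * e - (1 - e) \is a GRing.unit.
Proof.
move=> ee ce uU; apply/unitrP; exists (u^-1 * e - (1 - e)).
by rewrite !mul_corner // ?mulVr ?mulrV // mul1r addrC subrK.
Qed.

Section StarRing.
Variables (R : nzRingType) (star : R -> R).
Hypothesis starR : is_star_ring star.

Lemma starD (x y : R) : star (x + y) = star x + star y.
Proof. by case: starR. Qed.

Lemma starM (x y : R) : star (x * y) = star y * star x.
Proof. by case: starR. Qed.

Lemma starK : involutive star.
Proof. by case: starR. Qed.

Lemma star0 : star 0 = 0.
Proof. by apply: (addrI (star 0)); rewrite -starD !addr0. Qed.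

Lemma starN (x : R) : star (- x) = - star x.
Proof. by apply/eqP; rewrite -subr_eq0 opprK -starD addNr star0. Qed.

Lemma star1 : star 1 = 1.
Proof. by rewrite -[star 1]mulr1 -{2}[1](starK 1) -starM mulr1 starK. Qed.

Lemma projection_compl (e : R) : projection star e -> projection star (1 - e).
Proof. by case=> ee se; split; [exact: idem_compl | rewrite starD starN star1 se]. Qed.

Lemma projectionM (p e : R) :
  p * e = e * p -> projection star p -> projection star e -> projection star (p * e).
Proof.
move=> cpe [pp sp] [ee se]; split; last by rewrite starM sp se.
by rewrite mulrA -(mulrA p) -cpe mulrA pp -mulrA ee.
Qed.

Lemma projectionD (p q : R) : p * q = 0 -> q * p = 0 ->
  projection star p -> projection star q -> projection star (p + q).
Proof.
move=> pq qp [pp sp] [qq sq]; split; last by rewrite starD sp sq.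
by rewrite mulrDr !mulrDl pp pq qp qq addr0 add0r.
Qed.

End StarRing.

Theorem proposition4p14 (R : unitRingType) (star : R -> R) :
  is_star_ring star -> abelian_ring R ->
  forall a : R, star_clean star a ->
  forall e : R, projection star e -> star_clean star (a * e).
Proof.
move=> starR abR a [u [p [uU [projp ->]]]] e proje.
have [ee _] := proje; have ce := abR e ee.
exists (u * e - (1 - e)), (p * e + (1 - e)); split; [|split].
- exact: unit_corner.
- apply: projectionD => //.
  + by rewrite -mulrA mul_idem_compl ?mulr0.
  + by rewrite -ce mulrA mul_compl_idem ?mul0r.
  + by apply: projectionM => //; rewrite ce.
  + exact: projection_compl.
- by rewrite mulrDl [RHS]addrACA addNr addr0.
Qed.
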